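(* Fix $a'\in(-1,1)$. For $d\in(0,\sqrt{1-a'^2})$ let $r=\sqrt{a'^2+d^2}$, $H=-\frac1r-a'$ and $c=\frac{a'}{r}-\frac{d^2}{2}$ (the energy and constant $c$ of the planar Stark solution with $(x(0),y(0))=(a',d)$, $(\dot x(0),\dot y(0))=(0,0)$), and define $$T_\xi=4\int_0^{\xi_1}\frac{d\xi}{\sqrt{\xi^4+2H\xi^2+2(c+1)}},\quad \xi_1^2=-H-\sqrt{H^2-2(c+1)},$$ $$T_\eta=4\int_0^{\eta_1}\frac{d\eta}{\sqrt{-\eta^4+2H\eta^2-2(c-1)}},\quad \eta_1^2=H+\sqrt{H^2-2(c-1)}.$$ Then $T_\xi/T_\eta$ is a monotone function of $d\in(0,\sqrt{1-a'^2})$.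
   Context: $T_\xi$ and $T_\eta$ are the periods, in the regularized time $\tau$ (with $dt=(\xi^2+\eta^2)d\tau$), of the parabolic coordinates $\xi^2=r+x$, $\eta^2=r-x$ of that solution of the planar Stark problem $\ddot x=-x/r^3+1$, $\ddot y=-y/r^3$. *)

From Stdlib Require Import Reals.
From Coquelicot Require Import Coquelicot.
Open Scope R_scope.

Definition stark_r (a d : R) : R := sqrt (a ^ 2 + d ^ 2).
Definition stark_H (a d : R) : R := - / stark_r a d - a.
Definition stark_c (a d : R) : R := a / stark_r a d - d ^ 2 / 2.

Definition stark_xi1 (a d : R) : R :=
  let H := stark_H a d in let c := stark_c a d in
  sqrt (- H - sqrt (H ^ 2 - 2 * (c + 1))).
Definition stark_eta1 (a d : R) : R :=
  let H := stark_H a d in let c := stark_c a d in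
  sqrt (H + sqrt (H ^ 2 - 2 * (c - 1))).

(* T_xi = 4 * int_0^{xi1} dxi / sqrt(xi^4 + 2 H xi^2 + 2(c+1)),
   an improper integral (integrable singularity at the upper endpoint). *)
Definition T_xi (a d : R) : R :=
  let H := stark_H a d in let c := stark_c a d in
  4 * RInt_gen (fun x : R => / sqrt (x ^ 4 + 2 * H * x ^ 2 + 2 * (c + 1)))
        (at_point 0) (at_left (stark_xi1 a d)).

Definition T_eta (a d : R) : R :=
  let H := stark_H a d in let c := stark_c a d in
  4 * RInt_gen (fun x : R => / sqrt (- x ^ 4 + 2 * H * x ^ 2 - 2 * (c - 1)))
        (at_point 0) (at_left (stark_eta1 a d)).

From Stdlib Require Import Reals Lra Psatz FunctionalExtensionality.
From Coquelicot Require Import Coquelicot.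
Open Scope R_scope.

(* Write r = sqrt (a'^2 + d^2), which increases with d.  The substitutions
   xi = sqrt (r + a') sin t and eta = sqrt (r - a') sin t turn both periods into
   complete elliptic integrals 4 * int_0^(pi/2) dt / sqrt (P (sin t ^ 2)) with
   affine P, namely F_r u = 2/r + a' - r - (r + a') u for T_xi and
   G_r u = 2/r + r + a' + (r - a') u for T_eta.  For r <= r' the four endpoint
   cross-inequalities G_r v * F_r' u <= F_r u * G_r' v (u, v in {0, 1}) give one
   k > 0 with k F_r' <= F_r and G_r <= k G_r' on [0, 1]; hence
   sqrt k T_xi(r) <= T_xi(r') and T_eta(r') <= sqrt k T_eta(r), so T_xi / T_eta
   is nondecreasing in r, hence in d. *)

Lemma affine_pos (B c u : R) : 0 < B -> 0 < B + c -> 0 <= u <= 1 -> 0 < B + c * u.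
Proof. intros hB hBc hu. destruct (Rle_lt_dec 0 c); nra. Qed.

Lemma sin_sqr_bound (t : R) : 0 <= sin t ^ 2 <= 1.
Proof. pose proof (SIN_bound t). nra. Qed.

Lemma lt_inv_self (r : R) : 0 < r < 1 -> r < / r.
Proof.
  intros hr. apply (Rmult_lt_reg_r r); [lra|].
  rewrite Rinv_l by lra; nra.
Qed.

Lemma Rdiv_le_cross (x y z w : R) : 0 < y -> 0 < w -> x * w <= z * y -> x / y <= z / w.
Proof.
  intros hy hw h.
  apply (Rmult_le_reg_r (y * w)); [nra|].
  replace (x / y * (y * w)) with (x * w) by (field; lra).
  replace (z / w * (y * w)) with (z * y) by (field; lra).
  exact h.
Qed.

(** * Complete elliptic integrals *)

(* In Legendre's notation, ellK B b = K (- b / B) / sqrt B. *)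
Definition ellK (B b : R) : R := RInt (fun t => / sqrt (B + b * sin t ^ 2)) 0 (PI / 2).

Section EllK.
Variables B b : R.
Hypotheses (hB : 0 < B) (hBb : 0 < B + b).

Lemma ellK_integrand_pos (t : R) : 0 < / sqrt (B + b * sin t ^ 2).
Proof.
  apply Rinv_0_lt_compat, sqrt_lt_R0, affine_pos; auto using sin_sqr_bound.
Qed.

Lemma continuous_ellK_integrand (t : R) :
  continuous (fun t => / sqrt (B + b * sin t ^ 2)) t.
Proof.
  assert (0 < B + b * sin t ^ 2) by (apply affine_pos; auto using sin_sqr_bound).
  apply (@ex_derive_continuous R_AbsRing R_NormedModule); auto_derive.
  repeat split; [nra | apply Rgt_not_eq, sqrt_lt_R0; nra].
Qed.

Lemma ex_RInt_ellK_integrand (u v : R) :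
  ex_RInt (fun t => / sqrt (B + b * sin t ^ 2)) u v.
Proof.
  apply (@ex_RInt_continuous R_CompleteNormedModule).
  intros t _; apply continuous_ellK_integrand.
Qed.

Lemma ellK_pos : 0 < ellK B b.
Proof.
  apply RInt_gt_0; [pose proof PI2_1; lra | |].
  - intros t _; apply ellK_integrand_pos.
  - intros t _; apply continuous_ellK_integrand.
Qed.

Lemma ellK_scale (k : R) : 0 < k -> ellK (k * B) (k * b) = ellK B b / sqrt k.
Proof.
  intros hk; unfold ellK.
  transitivity (RInt (fun t => scal (/ sqrt k) (/ sqrt (B + b * sin t ^ 2))) 0 (PI / 2)).
  - apply RInt_ext; intros t _.
    assert (0 < B + b * sin t ^ 2) by (apply affine_pos; auto using sin_sqr_bound).
    unfold scal; simpl; unfold mult; simpl.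
    rewrite <- Rinv_mult, <- sqrt_mult_alt by lra.
    f_equal; f_equal; ring.
  - rewrite (@RInt_scal R_CompleteNormedModule) by apply ex_RInt_ellK_integrand.
    unfold scal; simpl; unfold mult; simpl; unfold Rdiv; ring.
Qed.

End EllK.

Lemma ellK_le_contravar (B1 b1 B2 b2 : R) : 0 < B2 -> 0 < B2 + b2 ->
  B2 <= B1 -> B2 + b2 <= B1 + b1 -> ellK B1 b1 <= ellK B2 b2.
Proof.
  intros hB2 hBb2 h0 h1.
  assert (hB1 : 0 < B1) by lra; assert (hBb1 : 0 < B1 + b1) by lra.
  apply RInt_le; [pose proof PI2_1; lra | apply ex_RInt_ellK_integrand; auto ..|].
  intros t _; pose proof (sin_sqr_bound t) as hs.
  assert (0 < B2 + b2 * sin t ^ 2) by (apply affine_pos; auto).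
  apply Rinv_le_contravar; [apply sqrt_lt_R0; auto | apply sqrt_le_1_alt].
  replace (B1 + b1 * sin t ^ 2 - (B2 + b2 * sin t ^ 2))
    with ((1 - sin t ^ 2) * (B1 - B2) + sin t ^ 2 * (B1 + b1 - (B2 + b2))) by ring.
  nra.
Qed.

Lemma ellK_le_scaled (k1 k2 B1 b1 B2 b2 : R) : 0 < k1 -> 0 < k2 -> 0 < B2 -> 0 < B2 + b2 ->
  k2 * B2 <= k1 * B1 -> k2 * (B2 + b2) <= k1 * (B1 + b1) ->
  sqrt k2 * ellK B1 b1 <= sqrt k1 * ellK B2 b2.
Proof.
  intros hk1 hk2 hB2 hBb2 h0 h1.
  assert (hB1 : 0 < B1) by nra; assert (hBb1 : 0 < B1 + b1) by nra.
  assert (hs1 : 0 < sqrt k1) by (apply sqrt_lt_R0; auto).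
  assert (hs2 : 0 < sqrt k2) by (apply sqrt_lt_R0; auto).
  assert (hle : ellK (k1 * B1) (k1 * b1) <= ellK (k2 * B2) (k2 * b2))
    by (apply ellK_le_contravar; nra).
  rewrite !ellK_scale in hle by auto.
  apply (Rmult_le_compat_l (sqrt k1 * sqrt k2)) in hle; [|nra].
  replace (sqrt k1 * sqrt k2 * (ellK B1 b1 / sqrt k1)) with (sqrt k2 * ellK B1 b1) in hle
    by (field; lra).
  replace (sqrt k1 * sqrt k2 * (ellK B2 b2 / sqrt k2)) with (sqrt k1 * ellK B2 b2) in hle
    by (field; lra).
  exact hle.
Qed.

Lemma ellK_ratio_le_scaled (k B1 b1 C1 c1 B2 b2 C2 c2 : R) :
  0 < k -> 0 < B2 -> 0 < B2 + b2 -> 0 < C1 -> 0 < C1 + c1 ->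
  k * B2 <= B1 -> k * (B2 + b2) <= B1 + b1 ->
  C1 <= k * C2 -> C1 + c1 <= k * (C2 + c2) ->
  ellK B1 b1 / ellK C1 c1 <= ellK B2 b2 / ellK C2 c2.
Proof.
  intros hk hB2 hBb2 hC1 hCc1 hB hBb hC hCc.
  assert (hC2 : 0 < C2) by nra; assert (hCc2 : 0 < C2 + c2) by nra.
  assert (hI : sqrt k * ellK B1 b1 <= sqrt 1 * ellK B2 b2)
    by (apply ellK_le_scaled; lra).
  assert (hJ : sqrt 1 * ellK C2 c2 <= sqrt k * ellK C1 c1)
    by (apply ellK_le_scaled; lra).
  rewrite sqrt_1 in hI, hJ.
  assert (0 < sqrt k) by (apply sqrt_lt_R0; auto).
  pose proof (ellK_pos B1 b1 ltac:(nra) ltac:(nra)).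
  pose proof (ellK_pos C1 c1 hC1 hCc1); pose proof (ellK_pos C2 c2 hC2 hCc2).
  apply Rdiv_le_cross; auto; nra.
Qed.

Lemma ellK_ratio_le (B1 b1 C1 c1 B2 b2 C2 c2 : R) :
  0 < B2 -> 0 < B2 + b2 -> 0 < C1 -> 0 < C1 + c1 -> 0 < C2 -> 0 < C2 + c2 ->
  C1 * B2 <= B1 * C2 -> C1 * (B2 + b2) <= (B1 + b1) * C2 ->
  (C1 + c1) * B2 <= B1 * (C2 + c2) -> (C1 + c1) * (B2 + b2) <= (B1 + b1) * (C2 + c2) ->
  ellK B1 b1 / ellK C1 c1 <= ellK B2 b2 / ellK C2 c2.
Proof.
  intros hB2 hBb2 hC1 hCc1 hC2 hCc2 h00 h01 h10 h11.
  set (k := Rmax (C1 / C2) ((C1 + c1) / (C2 + c2))).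
  assert (hk0 : C1 / C2 <= k) by apply Rmax_l.
  assert (hk1 : (C1 + c1) / (C2 + c2) <= k) by apply Rmax_r.
  assert (hk : 0 < k) by (apply Rlt_le_trans with (C1 / C2); [apply Rdiv_lt_0_compat | ]; lra).
  assert (hkB : k <= B1 / B2) by (apply Rmax_lub; apply Rdiv_le_cross; lra).
  assert (hkBb : k <= (B1 + b1) / (B2 + b2)) by (apply Rmax_lub; apply Rdiv_le_cross; lra).
  apply (ellK_ratio_le_scaled k); auto.
  - apply Rle_div_r in hkB; lra.
  - apply Rle_div_r in hkBb; lra.
  - apply Rle_div_l in hk0; lra.
  - apply Rle_div_l in hk1; lra.
Qed.

(** * Improper integrals up to a turning point *)

Lemma is_RInt_gen_at_left_lim (f F : R -> R) (a b l : R) : a < b ->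
  (forall y, a <= y < b -> is_RInt f a y (F y)) ->
  filterlim F (at_left b) (locally l) ->
  is_RInt_gen f (at_point a) (at_left b) l.
Proof.
  intros hab hF hlim.
  apply (filterlimi_lim_ext_loc (fun ab => F (snd ab))).
  - apply Filter_prod with (fun x => x = a) (fun y => a < y < b).
    + reflexivity.
    + assert (hd : 0 < b - a) by lra.
      exists (mkposreal _ hd); intros y hy hyb.
      change (Rabs (y - b) < b - a) in hy.
      apply Rabs_def2 in hy; lra.
    + intros x y -> hy; apply hF; simpl; lra.
  - eapply filterlim_comp; [apply filterlim_snd | exact hlim].
Qed.

Lemma filterlim_div_at_left (s : R) : 0 < s ->
  filterlim (fun y => y / s) (at_left s) (at_left 1).
Proof.
  intros hs P HP.
  assert (hcont : filterlim (fun y => y / s) (locally s) (locally 1)).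
  { replace (locally 1) with (locally (s / s)) by (f_equal; field; lra).
    apply (@ex_derive_continuous R_AbsRing R_NormedModule (fun y => y / s)); auto_derive; lra. }
  unfold filtermap, at_left, within.
  apply (filter_imp (fun y => y / s < 1 -> P (y / s))); [|exact (hcont _ HP)].
  intros y hy hys; apply hy.
  apply (Rmult_lt_reg_r s); [lra|]. field_simplify; lra.
Qed.

Lemma filterlim_asin_at_left_1 : filterlim asin (at_left 1) (locally (PI / 2)).
Proof.
  apply filterlim_locally; intros eps.
  pose proof PI2_1; pose proof (cond_pos eps).
  pose proof (Rmax_l 0 (PI / 2 - eps / 2)); pose proof (Rmax_r 0 (PI / 2 - eps / 2)).
  assert (Rmax 0 (PI / 2 - eps / 2) < PI / 2) by (apply Rmax_lub_lt; lra).
  set (t0 := Rmax 0 (PI / 2 - eps / 2)) in *.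
  assert (hsin : 0 <= sin t0 < 1).
  { split; [apply sin_ge_0; lra|].
    rewrite <- sin_PI2; apply sin_increasing_1; lra. }
  assert (hd : 0 < 1 - sin t0) by lra.
  exists (mkposreal _ hd); intros y hy hy1.
  change (Rabs (y - 1) < 1 - sin t0) in hy.
  apply Rabs_def2 in hy.
  pose proof (asin_bound y).
  assert (t0 < asin y) by (apply sin_increasing_0; try lra; rewrite sin_asin; lra).
  change (Rabs (asin y - PI / 2) < eps).
  apply Rabs_def1; lra.
Qed.

Section QuarticIntegral.
Variables A B b : R.
Hypotheses (hA : 0 < A) (hB : 0 < B) (hBA : 0 < B + b * A).

Lemma continuous_quartic_integrand (x : R) : x ^ 2 < A ->
  continuous (fun x => / sqrt ((A - x ^ 2) * (B + b * x ^ 2))) x.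
Proof.
  intros hx.
  assert (0 < B + b * x ^ 2) by (destruct (Rle_lt_dec 0 b); nra).
  apply (@ex_derive_continuous R_AbsRing R_NormedModule); auto_derive.
  repeat split; [nra | apply Rgt_not_eq, sqrt_lt_R0; nra].
Qed.

Lemma sqr_sqrt_mul_sin_lt (u : R) : - (PI / 2) < u < PI / 2 -> (sqrt A * sin u) ^ 2 < A.
Proof.
  intros hu.
  pose proof (cos_gt_0 u ltac:(lra) ltac:(lra)); pose proof (sin2_cos2 u); unfold Rsqr in *.
  assert (0 < A * (cos u * cos u)) by (apply Rmult_lt_0_compat; nra).
  rewrite Rpow_mult_distr, pow2_sqrt by lra; nra.
Qed.

Lemma quartic_integrand_sin (u : R) : - (PI / 2) < u < PI / 2 ->
  sqrt A * cos u * / sqrt ((A - (sqrt A * sin u) ^ 2) * (B + b * (sqrt A * sin u) ^ 2))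
  = / sqrt (B + b * A * sin u ^ 2).
Proof.
  intros hu.
  assert (hs : 0 < sqrt A) by (apply sqrt_lt_R0; auto).
  assert (0 < B + b * A * sin u ^ 2) by (apply affine_pos; auto using sin_sqr_bound).
  pose proof (cos_gt_0 u ltac:(lra) ltac:(lra)); pose proof (sin2_cos2 u); unfold Rsqr in *.
  replace ((A - (sqrt A * sin u) ^ 2) * (B + b * (sqrt A * sin u) ^ 2))
    with ((sqrt A * cos u) ^ 2 * (B + b * A * sin u ^ 2))
    by (rewrite !Rpow_mult_distr, pow2_sqrt by lra;
        replace (cos u ^ 2) with (1 - sin u ^ 2) by nra; ring).
  rewrite sqrt_mult, sqrt_pow2 by nra.
  field; split; [apply Rgt_not_eq, sqrt_lt_R0; lra | nra].
Qed.

Lemma is_RInt_quartic_sin (t : R) : 0 <= t < PI / 2 ->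
  is_RInt (fun x => / sqrt ((A - x ^ 2) * (B + b * x ^ 2))) 0 (sqrt A * sin t)
    (RInt (fun t => / sqrt (B + b * A * sin t ^ 2)) 0 t).
Proof.
  intros ht; pose proof PI2_1.
  assert (hsub := is_RInt_comp (fun x => / sqrt ((A - x ^ 2) * (B + b * x ^ 2)))
                    (fun u => sqrt A * sin u) (fun u => sqrt A * cos u) 0 t).
  rewrite Rmin_left, Rmax_right, sin_0, Rmult_0_r in hsub by lra.
  replace (RInt (fun t => / sqrt (B + b * A * sin t ^ 2)) 0 t)
    with (RInt (fun x => / sqrt ((A - x ^ 2) * (B + b * x ^ 2))) 0 (sqrt A * sin t)).
  - apply (@RInt_correct R_CompleteNormedModule), (@ex_RInt_continuous R_CompleteNormedModule).
    intros x hx; apply continuous_quartic_integrand.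
    assert (0 <= sin t) by (apply sin_ge_0; lra).
    assert (0 < sqrt A) by (apply sqrt_lt_R0; auto).
    pose proof (sqr_sqrt_mul_sin_lt t ltac:(lra)).
    rewrite Rmin_left, Rmax_right in hx by nra; nra.
  - symmetry; apply is_RInt_unique; refine (is_RInt_ext _ _ _ _ _ _ (hsub _ _)).
    + rewrite Rmin_left, Rmax_right by lra; intros u hu.
      apply quartic_integrand_sin; lra.
    + intros u hu; apply continuous_quartic_integrand, sqr_sqrt_mul_sin_lt; lra.
    + intros u hu; split.
      * auto_derive; auto; ring.
      * apply (@ex_derive_continuous R_AbsRing R_NormedModule (fun u => sqrt A * cos u)).
        auto_derive; auto.
Qed.

Lemma is_RInt_gen_quartic :
  is_RInt_gen (fun x => / sqrt ((A - x ^ 2) * (B + b * x ^ 2)))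
    (at_point 0) (at_left (sqrt A)) (ellK B (b * A)).
Proof.
  assert (hs : 0 < sqrt A) by (apply sqrt_lt_R0; auto).
  set (g := fun t => / sqrt (B + b * A * sin t ^ 2)).
  apply (is_RInt_gen_at_left_lim _ (fun y => RInt g 0 (asin (y / sqrt A)))); [lra | |].
  - intros y hy.
    assert (hq : 0 <= y / sqrt A < 1).
    { split; [apply Rmult_le_pos; [lra | left; apply Rinv_0_lt_compat; lra]|].
      apply (Rmult_lt_reg_r (sqrt A)); [lra|]; field_simplify; lra. }
    pose proof (asin_bound_lt (y / sqrt A) ltac:(lra)).
    assert (hsin : sin (asin (y / sqrt A)) = y / sqrt A) by (apply sin_asin; lra).
    assert (0 <= asin (y / sqrt A)).
    { destruct (Rle_or_lt 0 (asin (y / sqrt A))) as [h|h]; [exact h|].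
      assert (sin (asin (y / sqrt A)) < sin 0) by (apply sin_increasing_1; lra).
      rewrite sin_0 in *; lra. }
    replace y with (sqrt A * sin (asin (y / sqrt A))) at 1 by (rewrite hsin; field; lra).
    apply is_RInt_quartic_sin; lra.
  - eapply filterlim_comp;
      [eapply filterlim_comp; [apply filterlim_div_at_left, hs | apply filterlim_asin_at_left_1] |].
    change (ellK B (b * A)) with ((fun x => RInt g 0 x) (PI / 2)).
    apply (continuous_RInt_1 g 0 (PI / 2)).
    apply filter_forall; intros t.
    apply (@RInt_correct R_CompleteNormedModule), ex_RInt_ellK_integrand; auto.
Qed.

Lemma RInt_gen_quartic :
  RInt_gen (fun x => / sqrt ((A - x ^ 2) * (B + b * x ^ 2))) (at_point 0) (at_left (sqrt A))
  = ellK B (b * A).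
Proof.
  apply (@is_RInt_gen_unique R_CompleteNormedModule).
  - apply Proper_StrongProper, at_point_filter.
  - apply Proper_StrongProper, at_left_proper_filter.
  - apply is_RInt_gen_quartic.
Qed.

End QuarticIntegral.

(** * The Stark periods *)

Lemma stark_r_sqr (a d : R) : stark_r a d ^ 2 = a ^ 2 + d ^ 2.
Proof. unfold stark_r; apply pow2_sqrt; nra. Qed.

Lemma stark_r_bounds (a d : R) : -1 < a < 1 -> 0 < d -> d < sqrt (1 - a ^ 2) ->
  - stark_r a d < a < stark_r a d /\ stark_r a d < 1.
Proof.
  intros ha hd hd1.
  pose proof (stark_r_sqr a d).
  assert (0 < stark_r a d) by (unfold stark_r; apply sqrt_lt_R0; nra).
  assert (d ^ 2 < 1 - a ^ 2) by (rewrite <- (pow2_sqrt (1 - a ^ 2)) by nra; nra).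
  repeat split; nra.
Qed.

Lemma stark_r_le (a d1 d2 : R) : 0 <= d1 <= d2 -> stark_r a d1 <= stark_r a d2.
Proof. intros hd; unfold stark_r; apply sqrt_le_1_alt; nra. Qed.

Section StarkPeriods.
Variables a d : R.
Hypotheses (ha : -1 < a < 1) (hd : 0 < d) (hd1 : d < sqrt (1 - a ^ 2)).

Let r := stark_r a d.

Lemma T_xi_ellK : T_xi a d = 4 * ellK (2 / r + a - r) (- (r + a)).
Proof.
  destruct (stark_r_bounds a d ha hd hd1) as [har hr1]; fold r in har, hr1.
  pose proof (lt_inv_self r ltac:(lra)).
  assert (hd2 : d ^ 2 = r ^ 2 - a ^ 2) by (unfold r; rewrite stark_r_sqr; ring).
  assert (hxi1 : stark_xi1 a d = sqrt (r + a)).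
  { unfold stark_xi1, stark_H, stark_c; fold r; f_equal.
    replace ((- / r - a) ^ 2 - 2 * (a / r - d ^ 2 / 2 + 1)) with ((/ r - r) ^ 2)
      by (rewrite hd2; field; lra).
    rewrite sqrt_pow2 by lra; field; lra. }
  unfold T_xi; cbv zeta; f_equal.
  rewrite hxi1.
  replace (fun x => / sqrt (x ^ 4 + 2 * stark_H a d * x ^ 2 + 2 * (stark_c a d + 1)))
    with (fun x => / sqrt ((r + a - x ^ 2) * (2 / r + a - r + -1 * x ^ 2))).
  2:{ apply functional_extensionality; intros x.
      unfold stark_H, stark_c; fold r; rewrite hd2; f_equal; f_equal; field; lra. }
  rewrite RInt_gen_quartic by (unfold Rdiv in *; lra).
  f_equal; ring.
Qed.

Lemma T_eta_ellK : T_eta a d = 4 * ellK (2 / r + r + a) (r - a).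
Proof.
  destruct (stark_r_bounds a d ha hd hd1) as [har hr1]; fold r in har, hr1.
  pose proof (lt_inv_self r ltac:(lra)).
  assert (hd2 : d ^ 2 = r ^ 2 - a ^ 2) by (unfold r; rewrite stark_r_sqr; ring).
  assert (heta1 : stark_eta1 a d = sqrt (r - a)).
  { unfold stark_eta1, stark_H, stark_c; fold r; f_equal.
    replace ((- / r - a) ^ 2 - 2 * (a / r - d ^ 2 / 2 - 1)) with ((/ r + r) ^ 2)
      by (rewrite hd2; field; lra).
    rewrite sqrt_pow2 by lra; field; lra. }
  unfold T_eta; cbv zeta; f_equal.
  rewrite heta1.
  replace (fun x => / sqrt (- x ^ 4 + 2 * stark_H a d * x ^ 2 - 2 * (stark_c a d - 1)))
    with (fun x => / sqrt ((r - a - x ^ 2) * (2 / r + r + a + 1 * x ^ 2))).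
  2:{ apply functional_extensionality; intros x.
      unfold stark_H, stark_c; fold r; rewrite hd2; f_equal; f_equal; field; lra. }
  rewrite RInt_gen_quartic by (unfold Rdiv in *; lra).
  f_equal; ring.
Qed.

End StarkPeriods.

Definition period_ratio (a r : R) : R :=
  ellK (2 / r + a - r) (- (r + a)) / ellK (2 / r + r + a) (r - a).

Lemma T_xi_div_T_eta (a d : R) : -1 < a < 1 -> 0 < d -> d < sqrt (1 - a ^ 2) ->
  T_xi a d / T_eta a d = period_ratio a (stark_r a d).
Proof.
  intros ha hd hd1.
  destruct (stark_r_bounds a d ha hd hd1) as [har hr1].
  assert (0 < / stark_r a d) by (apply Rinv_0_lt_compat; lra).
  assert (hK : 0 < ellK (2 / stark_r a d + stark_r a d + a) (stark_r a d - a))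
    by (apply ellK_pos; unfold Rdiv; lra).
  rewrite T_xi_ellK, T_eta_ellK by auto.
  unfold period_ratio; field; lra.
Qed.

Lemma stark_cross_le (a p q u v : R) :
  -p < a < p -> p <= q -> q < 1 -> 0 <= u <= 1 -> 0 <= v <= 1 ->
  (2 / p + p + a + (p - a) * v) * (2 / q + a - q - (q + a) * u)
  <= (2 / p + a - p - (p + a) * u) * (2 / q + q + a + (q - a) * v).
Proof.
  intros ha hpq hq hu hv.
  assert (hp : 0 < p) by lra.
  set (P := 4 * (q + p) + 2 * a * p * q * (1 - u * v)
            + 2 * u * (q + p + a) + 2 * v * (q + p - a)).
  assert (hdiff : (2 / p + a - p - (p + a) * u) * (2 / q + q + a + (q - a) * v)
                  - (2 / p + p + a + (p - a) * v) * (2 / q + a - q - (q + a) * u)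
                  = (q - p) * P / (p * q))
    by (unfold P; field; lra).
  assert (hP : 0 <= P).
  { assert (- (p * q) <= a * q * (1 - u * v)).
    { destruct (Rle_lt_dec 0 a).
      - assert (0 <= a * q * (1 - u * v)) by (apply Rmult_le_pos; nra). nra.
      - assert (0 <= - (a * q) * (u * v)) by (apply Rmult_le_pos; nra). nra. }
    assert (0 <= u * (q + p + a)) by nra.
    assert (0 <= v * (q + p - a)) by nra.
    unfold P; nra. }
  assert (0 <= (q - p) * P / (p * q))
    by (apply Rmult_le_pos; [apply Rmult_le_pos | left; apply Rinv_0_lt_compat]; nra).
  lra.
Qed.

Lemma period_ratio_le (a p q : R) : -p < a < p -> p <= q -> q < 1 ->
  period_ratio a p <= period_ratio a q.
Proof.
  intros ha hpq hq.
  pose proof (lt_inv_self p ltac:(lra)); pose proof (lt_inv_self q ltac:(lra)).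
  pose proof (stark_cross_le a p q 0 0 ha hpq hq ltac:(lra) ltac:(lra)).
  pose proof (stark_cross_le a p q 1 0 ha hpq hq ltac:(lra) ltac:(lra)).
  pose proof (stark_cross_le a p q 0 1 ha hpq hq ltac:(lra) ltac:(lra)).
  pose proof (stark_cross_le a p q 1 1 ha hpq hq ltac:(lra) ltac:(lra)).
  unfold period_ratio, Rdiv in *.
  apply ellK_ratio_le; lra.
Qed.

Theorem proposition3p3 (a : R) (ha : -1 < a < 1) :
  (forall d1 d2 : R, 0 < d1 -> d1 <= d2 -> d2 < sqrt (1 - a ^ 2) ->
     T_xi a d1 / T_eta a d1 <= T_xi a d2 / T_eta a d2) \/
  (forall d1 d2 : R, 0 < d1 -> d1 <= d2 -> d2 < sqrt (1 - a ^ 2) ->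
     T_xi a d2 / T_eta a d2 <= T_xi a d1 / T_eta a d1).
Proof.
  left; intros d1 d2 hd1 hd12 hd2.
  rewrite !T_xi_div_T_eta by lra.
  destruct (stark_r_bounds a d1 ha hd1 ltac:(lra)) as [har1 _].
  destruct (stark_r_bounds a d2 ha ltac:(lra) hd2) as [_ hr2].
  apply period_ratio_le; auto.
  apply stark_r_le; lra.
Qed.
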